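(* Let $G$ be a finite group and $K$ an idempotent semifield. Let $V$ be an indecomposable representation of $G$ over $K$ and $W$ any representation of $G$ over $K$. Let $H\subseteq G$ be the stabilizer of some basis line of $V$ (a subgroup corresponding to $V$). Then there is a one-to-one correspondence between homomorphisms of representations $V\to W$ and $H$-invariant elements of $W$ (elements $w$ with $hw=w$ for all $h\in H$).
   Context: All semirings are commutative. A semifield is a semiring whose nonzero elements form a multiplicative group; idempotent means $a+a=a$ for all $a$. A representation of $G$ over $K$ is a $K$-linear action of $G$ on a free module $K^n$; a homomorphism of representations is a $K$-linear $G$-equivariant map; $V$ is indecomposable if it is not a direct sum of two nontrivial $G$-stable submodules. A basis line is a submodule spanned by a single vector of some basis; $G$ acts on basis lines by $g\cdot\mathrm{span}(v)=\mathrm{span}(gv)$. *)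

From HB Require Import structures.
From mathcomp Require Import all_boot all_algebra all_fingroup.
Set Implicit Arguments. Unset Strict Implicit. Unset Printing Implicit Defensive.
Import GRing.Theory.
Local Open Scope ring_scope.

(* Conventions (MathComp style): vectors of K^n are row vectors 'rV[K]_n,
   a representation of G on K^n is a map rho : gT -> 'M[K]_n that is a
   group homomorphism on G, and g acts on v by  v *m rho g  (right action,
   as in mathcomp's mxrepresentation).  K-linear maps K^n -> K^m are
   matrices 'M[K]_(n,m) acting by v |-> v *m A. *)

(* K is an idempotent semifield: nonzero elements are invertible
   (commutativity, 0 <> 1 are part of comNzSemiRingType) and a + a = a. *)
Definition idempotent_semifield (K : comNzSemiRingType) : Prop :=
  (forall a : K, a != 0 -> exists b : K, a * b = 1) /\
  (forall a : K, a + a = a).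

Definition is_rep (K : comNzSemiRingType) (gT : finGroupType) (G : {group gT})
    (n : nat) (rho : gT -> 'M[K]_n) : Prop :=
  rho 1%g = 1%:M /\
  (forall x y, x \in G -> y \in G -> rho (x * y)%g = rho x *m rho y).

Definition submodule (K : comNzSemiRingType) (n : nat) (U : 'rV[K]_n -> Prop) : Prop :=
  U 0 /\ (forall u v, U u -> U v -> U (u + v)) /\
  (forall (a : K) u, U u -> U (a *: u)).

Definition G_stable (K : comNzSemiRingType) (gT : finGroupType) (G : {group gT})
    (n : nat) (rho : gT -> 'M[K]_n) (U : 'rV[K]_n -> Prop) : Prop :=
  forall g u, g \in G -> U u -> U (u *m rho g).

Definition nontrivial_sub (K : comNzSemiRingType) (n : nat) (U : 'rV[K]_n -> Prop) : Prop :=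
  exists u, U u /\ u != 0.

Definition direct_sum (K : comNzSemiRingType) (n : nat) (U1 U2 : 'rV[K]_n -> Prop) : Prop :=
  forall v : 'rV[K]_n, exists! p : 'rV[K]_n * 'rV[K]_n,
    U1 p.1 /\ U2 p.2 /\ v = p.1 + p.2.

Definition indecomposable (K : comNzSemiRingType) (gT : finGroupType) (G : {group gT})
    (n : nat) (rho : gT -> 'M[K]_n) : Prop :=
  ~ exists U1 U2 : 'rV[K]_n -> Prop,
      submodule U1 /\ submodule U2 /\ G_stable G rho U1 /\ G_stable G rho U2 /\
      nontrivial_sub U1 /\ nontrivial_sub U2 /\ direct_sum U1 U2.

Definition is_basis (K : comNzSemiRingType) (n k : nat) (b : 'I_k -> 'rV[K]_n) : Prop :=
  forall v : 'rV[K]_n, exists! c : {ffun 'I_k -> K}, v = \sum_(j < k) c j *: b j.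

Definition line (K : comNzSemiRingType) (n : nat) (u : 'rV[K]_n) : 'rV[K]_n -> Prop :=
  fun x => exists a : K, x = a *: u.

Definition stabilizes_line (K : comNzSemiRingType) (gT : finGroupType) (n : nat)
    (rho : gT -> 'M[K]_n) (g : gT) (u : 'rV[K]_n) : Prop :=
  forall x, line (u *m rho g) x <-> line u x.

Definition rep_hom (K : comNzSemiRingType) (gT : finGroupType) (G : {group gT})
    (n m : nat) (rhoV : gT -> 'M[K]_n) (rhoW : gT -> 'M[K]_m) (A : 'M[K]_(n, m)) : Prop :=
  forall g, g \in G -> rhoV g *m A = A *m rhoW g.

Definition invariant_in (K : comNzSemiRingType) (gT : finGroupType) (H : {set gT})
    (m : nat) (rhoW : gT -> 'M[K]_m) (w : 'rV[K]_m) : Prop :=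
  forall h, h \in H -> w *m rhoW h = w.

From HB Require Import structures.
From mathcomp Require Import all_boot all_algebra all_fingroup.
Set Implicit Arguments. Unset Strict Implicit. Unset Printing Implicit Defensive.
Import GRing.Theory.
Local Open Scope ring_scope.

(* Over an idempotent semifield, sums and products of nonzero elements are
   nonzero, so invertible matrices are monomial: every g in G sends each basis
   vector to a nonzero multiple of a basis vector.  The coordinate supports of
   a G-stable set of basis lines and of its complement are complementary
   G-stable submodules, so indecomposability makes G transitive on the basis
   lines; and as 1 is the only unit of finite order, an element stabilising the
   line of b_i fixes b_i.  Hence a homomorphism A is determined by w = b_i A,
   which is fixed by the stabiliser H; conversely an H-fixed w defines A by
   sending c (b_i g) to c (w g), which is well defined because two such
   expressions of the same vector differ by an element of H. *)

Section ZeroSumFreeDomain.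
Variable K : comNzSemiRingType.
Hypothesis zero_sum_free : forall a b : K, a + b = 0 -> a = 0.
Hypothesis no_zero_divisors : forall a b : K, a != 0 -> b != 0 -> a * b != 0.

Lemma sum_eq0_term (I : finType) (F : I -> K) : \sum_i F i = 0 -> forall i, F i = 0.
Proof. by move=> F0 i; move: F0; rewrite (bigD1 i) //= => /zero_sum_free. Qed.

(* (P Q) j j = 1 yields l with P j l * Q l j != 0; then for l' != l the zero
   entry (Q P) l l' forces Q l j * P j l' = 0, hence P j l' = 0. *)
Lemma mx_inv_monomial k (P Q : 'M[K]_k) : P *m Q = 1%:M -> Q *m P = 1%:M ->
  forall j, exists2 l, P j l != 0 & forall l', l' != l -> P j l' = 0.
Proof.
move=> PQ QP j.
have /existsP[l PQjl] : [exists l, P j l * Q l j != 0].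
  have := congr1 (fun M : 'M[K]_k => M j j) PQ; rewrite !mxE eqxx /= => PQjj.
  have : \sum_l P j l * Q l j != 0 by rewrite PQjj; apply: oner_neq0.
  by apply: contraNT => /existsPn PQ0; apply/eqP/big1 => l _; apply/eqP/negbNE/PQ0.
exists l => [|l' l'l]; first by apply: contraNneq PQjl => ->; rewrite mul0r.
have := congr1 (fun M : 'M[K]_k => M l l') QP; rewrite !mxE eq_sym (negPf l'l) /=.
move/sum_eq0_term/(_ j)/eqP; apply: contraTeq => Pjl'.
by apply: no_zero_divisors Pjl'; apply: contraNneq PQjl => ->; rewrite mulr0.
Qed.

End ZeroSumFreeDomain.

Section IdempotentSemifield.
Variable K : comNzSemiRingType.
Hypothesis hK : idempotent_semifield K.

Lemma semifield_inv (a : K) : a != 0 -> exists2 a', a' != 0 & a * a' = 1.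
Proof.
case: hK => inv _ /inv [a' aa']; exists a' => //.
by apply: contra_eq_neq aa' => ->; rewrite mulr0 eq_sym oner_neq0.
Qed.

Lemma idem_addr_eq0 (a b : K) : a + b = 0 -> a = 0.
Proof.
case: hK => _ idem ab0.
by rewrite -[a]addr0 -ab0 addrA idem.
Qed.

Lemma semifield_mulf_neq0 (a b : K) : a != 0 -> b != 0 -> a * b != 0.
Proof.
move=> a0 b0; have [a' _ aa'] := semifield_inv a0.
by apply: contraNneq b0 => ab0; rewrite -[b]mul1r -aa' mulrAC ab0 mul0r.
Qed.

(* s = 1 + a + ... + a^N is fixed by a, and s is nonzero by zero-sum-freeness. *)
Lemma semifield_unit_torsion (a : K) N : a ^+ N.+1 = 1 -> a = 1.
Proof.
move=> aN; pose s := \sum_(t < N.+1) a ^+ t.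
have as_s : a * s = s.
  rewrite /s mulr_sumr big_ord_recr /= -exprS aN big_ord_recl /= expr0 addrC.
  by congr (_ + _); apply: eq_bigr => t _; rewrite -exprS.
have s0 : s != 0.
  by rewrite /s big_ord_recl expr0; apply: contra_neq (oner_neq0 K); apply: idem_addr_eq0.
have [s' _ ss'] := semifield_inv s0.
by rewrite -[a]mulr1 -ss' mulrA as_s.
Qed.

End IdempotentSemifield.

Section Coordinates.
Variables (K : comNzSemiRingType) (n k : nat) (b : 'I_k -> 'rV[K]_n).
Hypothesis hb : is_basis b.

Lemma bcoord_exists (v : 'rV[K]_n) : exists c : {ffun 'I_k -> K}, v == \sum_j c j *: b j.
Proof. by have [c [/eqP vc _]] := hb v; exists c. Qed.

Definition bcoord v : {ffun 'I_k -> K} := xchoose (bcoord_exists v).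

Lemma bcoordE v : v = \sum_j bcoord v j *: b j.
Proof. exact/eqP/(xchooseP (bcoord_exists v)). Qed.

Lemma bcoord_combination (c : 'I_k -> K) j : bcoord (\sum_l c l *: b l) j = c j.
Proof.
have [c' [_ uniq_c']] := hb (\sum_l c l *: b l).
have cE : \sum_l c l *: b l = \sum_l [ffun l => c l] l *: b l.
  by apply: eq_bigr => l _; rewrite ffunE.
by rewrite -[RHS](ffunE c) -(uniq_c' _ cE) -(uniq_c' _ (bcoordE _)).
Qed.

Lemma bcoord_inj u v : (forall j, bcoord u j = bcoord v j) -> u = v.
Proof. by move=> uv; rewrite [u]bcoordE [v]bcoordE; apply: eq_bigr => j _; rewrite uv. Qed.

Lemma bcoord_lin (I : finType) (a : I -> K) (x : I -> 'rV[K]_n) j :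
  bcoord (\sum_l a l *: x l) j = \sum_l a l * bcoord (x l) j.
Proof.
have -> : \sum_l a l *: x l = \sum_t (\sum_l a l * bcoord (x l) t) *: b t.
  under [RHS]eq_bigr => t _ do rewrite scaler_suml.
  rewrite exchange_big /=; apply: eq_bigr => l _.
  by rewrite {1}[x l]bcoordE scaler_sumr; apply: eq_bigr => t _; rewrite scalerA.
by rewrite bcoord_combination.
Qed.

Lemma bcoordZ a v j : bcoord (a *: v) j = a * bcoord v j.
Proof. by have := bcoord_lin (fun _ : 'I_1 => a) (fun _ => v) j; rewrite !big_ord1. Qed.

Lemma bcoordD u v j : bcoord (u + v) j = bcoord u j + bcoord v j.
Proof.
have := bcoord_lin (fun _ : 'I_2 => 1) (fun l => if l == ord0 then u else v) j.
by rewrite !big_ord_recr !big_ord0 /= !add0r !scale1r !mul1r.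
Qed.

Lemma bcoord0 j : bcoord 0 j = 0.
Proof. by rewrite -(scale0r (0 : 'rV[K]_n)) bcoordZ mul0r. Qed.

Lemma bcoord_basis l j : bcoord (b l) j = (l == j)%:R.
Proof.
rewrite -(bcoord_combination (fun t => (l == t)%:R) j); congr (bcoord _ j).
rewrite (bigD1 l) //= eqxx scale1r big1 ?addr0 // => t /negPf tl.
by rewrite eq_sym tl scale0r.
Qed.

Lemma bcoordZ_basis a l j : bcoord (a *: b l) j = a * (l == j)%:R.
Proof. by rewrite bcoordZ bcoord_basis. Qed.

Lemma bcoordZ_basis_neq0 a (l j : 'I_k) : (bcoord (a *: b l) j != 0) = (a != 0) && (l == j).
Proof.
by rewrite bcoordZ_basis; case: (eqVneq l j) => _; rewrite ?mulr1 ?mulr0 ?eqxx ?andbT ?andbF.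
Qed.

Lemma basis_neq0 l : b l != 0.
Proof.
apply: contra_neq (oner_neq0 K) => bl0.
by have := bcoord_basis l l; rewrite bl0 bcoord0 eqxx => ->.
Qed.

Lemma scale_basis_inj l a a' : a *: b l = a' *: b l -> a = a'.
Proof. by move=> aa'; have := bcoordZ_basis a l l; rewrite aa' !bcoordZ_basis eqxx !mulr1. Qed.

Lemma basis_mx_eq m (A B : 'M[K]_(n, m)) : (forall j, b j *m A = b j *m B) -> A = B.
Proof.
move=> AB; apply/row_matrixP => r; rewrite !rowE [delta_mx _ _]bcoordE !mulmx_suml.
by apply: eq_bigr => j _; rewrite -!scalemxAl AB.
Qed.

Lemma basis_extend m (f : 'I_k -> 'rV[K]_m) : exists A : 'M[K]_(n, m), forall j, b j *m A = f j.
Proof.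
exists (\matrix_r \sum_l bcoord (delta_mx 0 r) l *: f l) => j.
rewrite mulmx_sum_row; under eq_bigr => r _ do rewrite rowK scaler_sumr.
rewrite exchange_big /=; transitivity (\sum_l bcoord (b j) l *: f l).
  apply: eq_bigr => l _; rewrite [in RHS](row_sum_delta (b j)) bcoord_lin scaler_suml.
  by apply: eq_bigr => r _; rewrite scalerA.
rewrite (bigD1 j) //= bcoord_basis eqxx scale1r big1 ?addr0 // => l /negPf lj.
by rewrite bcoord_basis eq_sym lj scale0r.
Qed.

Definition supported (S : {set 'I_k}) v := forall l, l \notin S -> bcoord v l = 0.

Definition restrict (S : {set 'I_k}) v := \sum_l (if l \in S then bcoord v l else 0) *: b l.

Lemma bcoord_restrict S v l : bcoord (restrict S v) l = if l \in S then bcoord v l else 0.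
Proof. exact: bcoord_combination. Qed.

Lemma supported_restrict S v : supported S (restrict S v).
Proof. by move=> l /negPf lS; rewrite bcoord_restrict lS. Qed.

Lemma supported_basis (S : {set 'I_k}) l : l \in S -> supported S (b l).
Proof. by move=> lS t; rewrite bcoord_basis; case: eqVneq => // <-; rewrite lS. Qed.

Lemma supported_submodule S : submodule (supported S).
Proof.
split; first by move=> l _; rewrite bcoord0.
split=> [u v Su Sv | a u Su] l lS; first by rewrite bcoordD Su ?Sv ?addr0.
by rewrite bcoordZ Su ?mulr0.
Qed.

Lemma supported_decomposition S v q1 q2 :
  supported S q1 -> supported (~: S) q2 -> v = q1 + q2 -> q1 = restrict S v.
Proof.
move=> Sq1 Sq2 ->; apply: bcoord_inj => l; rewrite bcoord_restrict bcoordD.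
case: ifP => lS; last by rewrite Sq1 ?lS.
by rewrite Sq2 ?addr0 // inE lS.
Qed.

Lemma supported_direct_sum S : direct_sum (supported S) (supported (~: S)).
Proof.
move=> v; exists (restrict S v, restrict (~: S) v); split.
  split; [exact: supported_restrict | split; first exact: supported_restrict].
  apply: bcoord_inj => l; rewrite /= bcoordD !bcoord_restrict inE.
  by case: (l \in S); rewrite ?addr0 ?add0r.
move=> [q1 q2] /= [Sq1 [Sq2 vq]]; congr (_, _); symmetry.
  exact: supported_decomposition Sq1 Sq2 vq.
by apply: (supported_decomposition Sq2 _ (etrans vq (addrC _ _))); rewrite setCK.
Qed.

Definition bcoord_mx (M : 'M[K]_n) : 'M[K]_k := \matrix_(j, l) bcoord (b j *m M) l.

Lemma bcoord_mxM M N : bcoord_mx (M *m N) = bcoord_mx M *m bcoord_mx N.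
Proof.
apply/matrixP => j l; rewrite !mxE mulmxA {1}[b j *m M]bcoordE mulmx_suml.
under eq_bigr => t _ do rewrite -scalemxAl.
by rewrite bcoord_lin; apply: eq_bigr => t _; rewrite !mxE.
Qed.

Lemma bcoord_mx1 : bcoord_mx 1%:M = 1%:M.
Proof. by apply/matrixP => j l; rewrite !mxE mulmx1 bcoord_basis. Qed.

End Coordinates.

Section MonomialRepresentation.
Variables (K : comNzSemiRingType) (n k : nat) (b : 'I_k -> 'rV[K]_n).
Variables (gT : finGroupType) (G : {group gT}) (rho : gT -> 'M[K]_n).
Hypotheses (hK : idempotent_semifield K) (hb : is_basis b) (hrho : is_rep G rho).

Lemma rep1 : rho 1%g = 1%:M.
Proof. by case: hrho. Qed.

Lemma repM x y : x \in G -> y \in G -> rho (x * y)%g = rho x *m rho y.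
Proof. by case: hrho => _; apply. Qed.

Lemma repK p g (v : 'M[K]_(p, n)) : g \in G -> v *m rho g *m rho g^-1 = v.
Proof. by move=> Gg; rewrite -mulmxA -repM ?groupV // mulgV rep1 mulmx1. Qed.

Lemma bcoord_mx_rep_inv g h : g \in G -> h \in G -> (g * h = 1)%g ->
  bcoord_mx hb (rho g) *m bcoord_mx hb (rho h) = 1%:M.
Proof. by move=> Gg Gh gh1; rewrite -bcoord_mxM -repM // gh1 rep1 bcoord_mx1. Qed.

Lemma rep_monomial g j : g \in G -> exists l, exists2 d, d != 0 & b j *m rho g = d *: b l.
Proof.
move=> Gg; have [l Pjl Pjl'] := mx_inv_monomial (idem_addr_eq0 hK)
  (semifield_mulf_neq0 hK) (bcoord_mx_rep_inv Gg (groupVr Gg) (mulgV g))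
  (bcoord_mx_rep_inv (groupVr Gg) Gg (mulVg g)) j.
exists l; exists (bcoord hb (b j *m rho g) l); first by rewrite mxE in Pjl.
rewrite [LHS](bcoordE hb) (bigD1 l) //= big1 ?addr0 // => t tl.
by have := Pjl' t tl; rewrite mxE => ->; rewrite scale0r.
Qed.

Lemma rep_monomial_inv g j l d d' : g \in G -> b j *m rho g = d *: b l -> d * d' = 1 ->
  b l *m rho g^-1 = d' *: b j.
Proof.
move=> Gg jgl dd'; rewrite -[b l]scale1r -dd' mulrC -scalerA -jgl.
by rewrite -scalemxAl repK.
Qed.

Lemma stabilizer_scalar1 i h a : h \in G -> b i *m rho h = a *: b i -> a = 1.
Proof.
move=> Gh iha; have powE t : b i *m rho (h ^+ t)%g = a ^+ t *: b i.
  elim: t => [|t IHt]; first by rewrite expg0 rep1 mulmx1 expr0 scale1r.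
  by rewrite expgSr repM ?groupX // mulmxA IHt -scalemxAl iha scalerA exprSr.
have := powE #[h]%g; rewrite expg_order rep1 mulmx1 -{1}(scale1r (b i)).
move/(scale_basis_inj hb); rewrite -(prednK (order_gt0 h)) => /esym.
exact: semifield_unit_torsion.
Qed.

Lemma stabilizes_line_basisP g i : g \in G ->
  stabilizes_line rho g (b i) <-> b i *m rho g = b i.
Proof.
move=> Gg; split=> [stab | igi x]; last by rewrite igi.
have [|a iga] := (stab (b i *m rho g)).1; first by exists 1; rewrite scale1r.
by rewrite iga (stabilizer_scalar1 Gg iga) scale1r.
Qed.

Definition stable_indices (S : {set 'I_k}) := forall g j l d,
  g \in G -> j \in S -> b j *m rho g = d *: b l -> d != 0 -> l \in S.

Lemma stable_indicesC S : stable_indices S -> stable_indices (~: S).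
Proof.
move=> stS g j l d Gg; rewrite !inE => jS jgl d0; apply: contra jS => lS.
have [d' d'0 dd'] := semifield_inv hK d0.
exact: stS (groupVr Gg) lS (rep_monomial_inv Gg jgl dd') d'0.
Qed.

Lemma supported_G_stable S : stable_indices S -> G_stable G rho (supported hb S).
Proof.
move=> stS g u Gg Su l lS; rewrite [u](bcoordE hb) mulmx_suml.
under eq_bigr => j _ do rewrite -scalemxAl.
rewrite bcoord_lin big1 // => j _; have [jS | /Su->] := boolP (j \in S); last by rewrite mul0r.
have [t [d d0 jgt]] := rep_monomial j Gg; have tS := stS _ _ _ _ Gg jS jgt d0.
rewrite jgt bcoordZ_basis; case: (eqVneq t l) => [tl | _]; first by rewrite -tl tS in lS.
by rewrite mulr0n !mulr0.
Qed.

Lemma indecomposable_stable_indices S j l :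
  indecomposable G rho -> stable_indices S -> j \in S -> l \in S.
Proof.
move=> indec stS jS; apply/negPn/negP => lS; apply: indec.
exists (supported hb S), (supported hb (~: S)).
do 2![split; first exact: supported_submodule].
split; first exact: supported_G_stable.
split; first exact/supported_G_stable/stable_indicesC.
split; first by exists (b j); split; [exact: supported_basis | exact: basis_neq0].
split; first by exists (b l); split; [apply: supported_basis; rewrite inE | exact: basis_neq0].
exact: supported_direct_sum.
Qed.

(* By monomiality the entry is nonzero iff b i *m rho g is a nonzero multiple of b l. *)
Definition basis_orbit i := [set l | [exists g in G, bcoord_mx hb (rho g) i l != 0]].

Lemma basis_orbit_self i : i \in basis_orbit i.
Proof.
rewrite inE; apply/existsP; exists 1%g; rewrite group1 mxE rep1 mulmx1 bcoord_basis eqxx.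
exact: oner_neq0.
Qed.

Lemma basis_orbit_stable i : stable_indices (basis_orbit i).
Proof.
move=> g j l d Gg; rewrite !inE => /exists_inP[g' Gg' ig'j] jgl d0.
apply/exists_inP; exists (g' * g)%g; first exact: groupM.
have [t [d' d'0 ig't]] := rep_monomial i Gg'.
move: ig'j; rewrite !mxE ig't bcoordZ_basis_neq0 => /andP[_ /eqP tj].
rewrite repM // mulmxA ig't -scalemxAl tj jgl scalerA bcoordZ_basis_neq0 eqxx andbT.
exact: semifield_mulf_neq0.
Qed.

Lemma rep_transitive i l : indecomposable G rho ->
  exists2 g, g \in G & exists c, b l = c *: (b i *m rho g).
Proof.
move=> indec.
have := indecomposable_stable_indices l indec (@basis_orbit_stable i) (basis_orbit_self i).
rewrite inE => /exists_inP[g Gg igl]; exists g => //.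
have [t [d d0 igt]] := rep_monomial i Gg.
move: igl; rewrite mxE igt bcoordZ_basis_neq0 => /andP[_ /eqP <-].
have [d' _ dd'] := semifield_inv hK d0.
by exists d'; rewrite scalerA mulrC dd' scale1r.
Qed.

End MonomialRepresentation.

Section RepresentationHoms.
Variables (K : comNzSemiRingType) (n m k : nat) (b : 'I_k -> 'rV[K]_n) (i : 'I_k).
Variables (gT : finGroupType) (G : {group gT}) (rhoV : gT -> 'M[K]_n) (rhoW : gT -> 'M[K]_m).
Hypotheses (hK : idempotent_semifield K) (hb : is_basis b).
Hypotheses (hrV : is_rep G rhoV) (hrW : is_rep G rhoW) (indec : indecomposable G rhoV).

Lemma rep_hom_eq A1 A2 : rep_hom G rhoV rhoW A1 -> rep_hom G rhoV rhoW A2 ->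
  b i *m A1 = b i *m A2 -> A1 = A2.
Proof.
move=> homA1 homA2 iA; apply: (basis_mx_eq hb) => j.
have [g Gg [c ->]] := rep_transitive hK hb hrV i j indec.
by rewrite -!scalemxAl -!mulmxA homA1 // homA2 // !mulmxA iA.
Qed.

Lemma orbit_equivariant_rep_hom A :
  (forall h, h \in G -> b i *m rhoV h *m A = b i *m A *m rhoW h) -> rep_hom G rhoV rhoW A.
Proof.
move=> eqA g Gg; apply: (basis_mx_eq hb) => j.
have [g' Gg' [c ->]] := rep_transitive hK hb hrV i j indec.
rewrite -!scalemxAl !mulmxA -[b i *m _ *m rhoV g]mulmxA -(repM hrV) //.
by rewrite eqA ?groupM // (repM hrW) // eqA // !mulmxA.
Qed.

Section Extension.
Variable w : 'rV[K]_m.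
Hypothesis w_fixed : forall h, h \in G -> b i *m rhoV h = b i -> w *m rhoW h = w.

(* g h^-1 stabilises the line of b i, hence fixes b i and w. *)
Lemma fixed_orbit_value g h c : g \in G -> h \in G ->
  c *: (b i *m rhoV g) = b i *m rhoV h -> c *: (w *m rhoW g) = w *m rhoW h.
Proof.
move=> Gg Gh igh; have Ghg : (g * h^-1)%g \in G by rewrite groupM ?groupV.
have c0 : c != 0.
  apply: contra_neq (basis_neq0 hb i) => c0.
  by rewrite -(repK hrV (b i) Gh) -igh c0 scale0r !mul0mx.
have [c' _ cc'] := semifield_inv hK c0.
have ighc : b i *m rhoV (g * h^-1)%g = c' *: b i.
  have := congr1 (fun v => c' *: (v *m rhoV h^-1)) igh.
  by rewrite /= -scalemxAl scalerA mulrC cc' scale1r (repK hrV) // -mulmxA -(repM hrV) ?groupV.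
have c'1 := stabilizer_scalar1 hK hb hrV Ghg ighc.
have c1 : c = 1 by rewrite -cc' c'1 mulr1.
rewrite c'1 scale1r in ighc.
by rewrite c1 scale1r -[w in RHS](w_fixed Ghg ighc) -mulmxA -(repM hrW) // -mulgA mulVg mulg1.
Qed.

Lemma rep_hom_extend : exists2 A, rep_hom G rhoV rhoW A & b i *m A = w.
Proof.
have /fin_all_exists[gc gcP] : forall l, exists p : gT * K,
    p.1 \in G /\ b l = p.2 *: (b i *m rhoV p.1).
  by move=> l; have [g Gg [c lgc]] := rep_transitive hK hb hrV i l indec; exists (g, c).
have [A bA] := basis_extend hb (fun l => (gc l).2 *: (w *m rhoW (gc l).1)).
have orbitA h : h \in G -> b i *m rhoV h *m A = w *m rhoW h.
  move=> Gh; have [l [d _ ihl]] := rep_monomial hK hb hrV i Gh.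
  have [Ggc lgc] := gcP l; rewrite ihl -scalemxAl bA scalerA.
  by apply: fixed_orbit_value Ggc Gh _; rewrite -scalerA -lgc ihl.
have iA : b i *m A = w.
  by have := orbitA 1%g (group1 G); rewrite (rep1 hrV) (rep1 hrW) !mulmx1.
exists A => //; apply: orbit_equivariant_rep_hom => h Gh.
by rewrite orbitA // iA.
Qed.

End Extension.
End RepresentationHoms.

Theorem lemma3p19 (gT : finGroupType) (G : {group gT}) (K : comNzSemiRingType)
    (n m k : nat) (rhoV : gT -> 'M[K]_n) (rhoW : gT -> 'M[K]_m)
    (b : 'I_k -> 'rV[K]_n) (i : 'I_k) (H : {set gT}) :
  idempotent_semifield K ->
  is_rep G rhoV -> is_rep G rhoW ->
  indecomposable G rhoV ->
  is_basis b ->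
  (forall g, g \in H <-> (g \in G /\ stabilizes_line rhoV g (b i))) ->
  [/\ (forall A : 'M[K]_(n, m), rep_hom G rhoV rhoW A -> invariant_in H rhoW (b i *m A)),
      (forall A1 A2 : 'M[K]_(n, m), rep_hom G rhoV rhoW A1 -> rep_hom G rhoV rhoW A2 ->
          b i *m A1 = b i *m A2 -> A1 = A2)
    & (forall w : 'rV[K]_m, invariant_in H rhoW w ->
          exists2 A : 'M[K]_(n, m), rep_hom G rhoV rhoW A & b i *m A = w)].
Proof.
move=> hK hrV hrW indec hb hH.
have stabP h : h \in H <-> h \in G /\ b i *m rhoV h = b i.
  have lineP := stabilizes_line_basisP hK hb hrV.
  by split=> [/hH[Gh /(lineP _ _ Gh)] | [Gh /(lineP _ _ Gh) stab]] //; apply/hH.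
split.
- by move=> A homA h /stabP[Gh ihi]; rewrite -mulmxA -homA // mulmxA ihi.
- exact: rep_hom_eq.
- move=> w w_inv; apply: rep_hom_extend => // h Gh ihi.
  exact/w_inv/stabP.
Qed.
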